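(* Let $\mathsf{Ax}\subseteq\{\mathsf{N}_\Diamond,\mathsf{C}_\Diamond,\mathsf{I}_{\Diamond\Box}\}$. Then $\mathsf{CK}\oplus\mathsf{Ax}$ is sound and strongly complete with respect to the class $\mathcal{F}$ of $\mathsf{CK}$-frames satisfying ($\mathsf{A}$-corr) for each $\mathsf{A}\in\mathsf{Ax}$, i.e. $\Gamma\vdash_{\mathsf{Ax}}\varphi$ iff $\Gamma\Vdash_{\mathcal{F}}\varphi$ for all $\Gamma\subseteq\mathbf{L}$, $\varphi\in\mathbf{L}$.
   Context: Formulas: $\mathbf{L}$ is generated from a countably infinite set of propositional variables by $\varphi ::= p \mid \bot \mid \varphi\wedge\varphi \mid \varphi\vee\varphi \mid \varphi\to\varphi \mid \Box\varphi \mid \Diamond\varphi$. Axioms: $\mathsf{K}_\Box$: $\Box(\varphi\to\psi)\to(\Box\varphi\to\Box\psi)$; $\mathsf{K}_\Diamond$: $\Box(\varphi\to\psi)\to(\Diamond\varphi\to\Diamond\psi)$; $\mathsf{N}_\Diamond$: $\Diamond\bot\to\bot$; $\mathsf{C}_\Diamond$: $\Diamond(\varphi\vee\psi)\to\Diamond\varphi\vee\Diamond\psi$; $\mathsf{I}_{\Diamond\Box}$: $(\Diamond\varphi\to\Box\psi)\to\Box(\varphi\to\psi)$. For a set $\mathsf{Ax}$ of axioms, $\mathsf{CK}\oplus\mathsf{Ax}$ is the relation $\Gamma\vdash_{\mathsf{Ax}}\varphi$ inductively generated by: (Ax) $\Gamma\vdash\varphi$ whenever $\varphi$ is a substitution instance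 of an axiom of a standard Hilbert axiomatisation of intuitionistic propositional logic, of $\mathsf{K}_\Box$, of $\mathsf{K}_\Diamond$, or of an element of $\mathsf{Ax}$; (El) $\Gamma\vdash\varphi$ if $\varphi\in\Gamma$; (MP) from $\Gamma\vdash\varphi$ and $\Gamma\vdash\varphi\to\psi$ infer $\Gamma\vdash\psi$; (Nec) from $\emptyset\vdash\varphi$ infer $\Gamma\vdash\Box\varphi$. A $\mathsf{CK}$-frame is a tuple $(X,e,\le,R)$ where $(X,\le)$ is a preorder, $e\in X$ is a maximal element of $(X,\le)$, and $R$ is a binary relation on $X$ with $eRx$ iff $x=e$. A valuation assigns to each variable $p$ an upset $V(p)$ with $e\in V(p)$. Forcing: $x\Vdash p$ iff $x\in V(p)$; $x\Vdash\bot$ iff $x=e$; $\wedge,\vee$ pointwise; $x\Vdash\varphi\to\psi$ iff for all $y\ge x$, $y\Vdash\varphi$ implies $y\Vdash\psi$; $x\Vdash\Box\varphi$ iff for all $y,z$ with $x\le y$ and $yRz$, $z\Vdash\varphi$; $x\Vdash\Diamond\varphi$ iff for all $y\ge x$ there is $z$ with $yRz$ and $z\Vdash\varphi$. For a class $\mathcal{F}$ of frames, $\Gamma\Vdash_{\mathcal{F}}\varphi$ means: for every frame in $\mathcal{F}$, every valuation and every world $x$, if $x$ forces all of $\Gamma$ then $x\Vdash\varphi$. Notation: $R[x]=\{y\mid xRy\}$, $R^{-1}(x)=\{y\mid yRx\}$, ${\downarrow}a=\{x\mid x\le y\text{ for some }y\in a\}$. Frame conditions: ($\mathsf{N}_\Diamond$-corr)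 for all $x$, if $yRe$ for all $y\ge x$ then $x=e$. ($\mathsf{C}_\Diamond$-corr) for all $x,y,z$, if $y,z\notin R^{-1}(e)$, $x\le y$ and $x\le z$, then there is $w\ge x$ with $R[w]\subseteq{\downarrow}R[y]$ and $R[w]\subseteq{\downarrow}R[z]$. ($\mathsf{I}_{\Diamond\Box}$-corr) for all $x,y,z$, if $xRy$, $y\le z$ and $z\ne e$, then there are $u,w$ with $x\le u$, $uRw$, $w\le z$ such that for every $s\ge u$, either $sRe$ or there is $t$ with $sRt$ and $z\le t$. *)

Inductive form : Type :=
| Var : nat -> form
| Bot : form
| And : form -> form -> form
| Or  : form -> form -> form
| Imp : form -> form -> form
| Box : form -> form
| Dia : form -> form.

Inductive axname : Type := AxN | AxC | AxI.

Definition ax_instance (a : axname) (f : form) : Prop :=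
  match a with
  | AxN => f = Imp (Dia Bot) Bot
  | AxC => exists p q, f = Imp (Dia (Or p q)) (Or (Dia p) (Dia q))
  | AxI => exists p q, f = Imp (Imp (Dia p) (Box q)) (Box (Imp p q))
  end.

Inductive base_axiom : form -> Prop :=
| IPC1 p q : base_axiom (Imp p (Imp q p))
| IPC2 p q r : base_axiom (Imp (Imp p (Imp q r)) (Imp (Imp p q) (Imp p r)))
| IPC3 p q : base_axiom (Imp (And p q) p)
| IPC4 p q : base_axiom (Imp (And p q) q)
| IPC5 p q : base_axiom (Imp p (Imp q (And p q)))
| IPC6 p q : base_axiom (Imp p (Or p q))
| IPC7 p q : base_axiom (Imp q (Or p q))
| IPC8 p q r : base_axiom (Imp (Imp p r) (Imp (Imp q r) (Imp (Or p q) r)))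
| IPC9 p : base_axiom (Imp Bot p)
| KBox p q : base_axiom (Imp (Box (Imp p q)) (Imp (Box p) (Box q)))
| KDia p q : base_axiom (Imp (Box (Imp p q)) (Imp (Dia p) (Dia q))).

Inductive derives (Ax : axname -> Prop) : (form -> Prop) -> form -> Prop :=
| d_base Gamma f : base_axiom f -> derives Ax Gamma f
| d_ax Gamma a f : Ax a -> ax_instance a f -> derives Ax Gamma f
| d_el (Gamma : form -> Prop) f : Gamma f -> derives Ax Gamma f
| d_mp Gamma f g : derives Ax Gamma f -> derives Ax Gamma (Imp f g) ->
    derives Ax Gamma g
| d_nec Gamma f : derives Ax (fun _ => False) f -> derives Ax Gamma (Box f).

Record frame : Type := Frame {
  W : Type;
  le : W -> W -> Prop;
  e : W;
  R : W -> W -> Prop;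
  le_refl : forall x, le x x;
  le_trans : forall x y z, le x y -> le y z -> le x z;
  e_max : forall y, le e y -> y = e;
  R_e : forall x, R e x <-> x = e
}.

Record valuation (F : frame) : Type := Valuation {
  val : nat -> W F -> Prop;
  val_up : forall p x y, le F x y -> val p x -> val p y;
  val_e : forall p, val p (e F)
}.

Fixpoint forces (F : frame) (V : valuation F) (x : W F) (f : form) : Prop :=
  match f with
  | Var p => val F V p x
  | Bot => x = e F
  | And f g => forces F V x f /\ forces F V x g
  | Or f g => forces F V x f \/ forces F V x g
  | Imp f g => forall y, le F x y -> forces F V y f -> forces F V y g
  | Box f => forall y z, le F x y -> R F y z -> forces F V z f
  | Dia f => forall y, le F x y -> exists z, R F y z /\ forces F V z f
  end.

Definition N_corr (F : frame) : Prop :=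
  forall x, (forall y, le F x y -> R F y (e F)) -> x = e F.

Definition R_sub_down (F : frame) (w y : W F) : Prop :=
  forall v, R F w v -> exists t, R F y t /\ le F v t.

Definition C_corr (F : frame) : Prop :=
  forall x y z, ~ R F y (e F) -> ~ R F z (e F) -> le F x y -> le F x z ->
    exists w, le F x w /\ R_sub_down F w y /\ R_sub_down F w z.

Definition I_corr (F : frame) : Prop :=
  forall x y z, R F x y -> le F y z -> z <> e F ->
    exists u w, le F x u /\ R F u w /\ le F w z /\
      forall s, le F u s -> R F s (e F) \/ exists t, R F s t /\ le F z t.

Definition corr (a : axname) : frame -> Prop :=
  match a with AxN => N_corr | AxC => C_corr | AxI => I_corr end.

Definition frame_class (Ax : axname -> Prop) (F : frame) : Prop :=
  forall a, Ax a -> corr a F.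

Definition sem_cons (K : frame -> Prop) (Gamma : form -> Prop) (f : form) : Prop :=
  forall (F : frame) (V : valuation F) (x : W F),
    K F -> (forall g, Gamma g -> forces F V x g) -> forces F V x f.

From Stdlib Require Import List Classical Lia Cantor FunctionalExtensionality PropExtensionality.
Import ListNotations.

(* For completeness, the canonical worlds besides [e] are pairs (G, D) of a consistent prime
   theory G and a set D of formulas, with (G, D) R P iff the prime theory P contains every
   [f] with [Box f] in G and is disjoint from D ([e] is the inconsistent theory). The pair is
   admissible when G contains no [Dia] of a nonempty disjunction from D; a Lindenbaum lemma
   for such "avoiding" pairs then yields R-successors for [Dia] formulas. Changing D while
   keeping G is the source of all counter-worlds: D = {} refutes [Box], D = {f} refutes
   [Dia f] (and, with f = Bot, gives N-corr), and for C-corr D collects the formulas that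
   the two given worlds refute in all of their successors. *)

Fixpoint form_code (f : form) : nat :=
  match f with
  | Var n => to_nat (0, n)
  | Bot => to_nat (1, 0)
  | And a b => to_nat (2, to_nat (form_code a, form_code b))
  | Or a b => to_nat (3, to_nat (form_code a, form_code b))
  | Imp a b => to_nat (4, to_nat (form_code a, form_code b))
  | Box a => to_nat (5, form_code a)
  | Dia a => to_nat (6, form_code a)
  end.

(* Keeps [injection] from unfolding the Cantor pairing. *)
Local Arguments to_nat : simpl never.

Lemma form_code_inj f g : form_code f = form_code g -> f = g.
Proof.
  revert g; induction f; destruct g; cbn [form_code]; intros H;
    apply to_nat_inj in H; try discriminate; try (injection H as H); subst; try reflexivity;
    try (apply to_nat_inj in H; injection H as H1 H2); f_equal; auto.
Qed.

Section Soundness.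
Variables (F : frame) (V : valuation F).

Lemma forces_at_e f : forces F V (e F) f.
Proof.
  induction f; cbn; auto.
  - apply val_e.
  - intros y Hy _. apply e_max in Hy; subst; auto.
  - intros y z Hy Hz. apply e_max in Hy; subst. apply R_e in Hz; subst; auto.
  - intros y Hy. apply e_max in Hy; subst. exists (e F); split; auto. apply R_e; auto.
Qed.

Lemma forces_mono f x y : le F x y -> forces F V x f -> forces F V y f.
Proof.
  revert x y; induction f; cbn; intros x y Hxy H.
  - eapply val_up; eauto.
  - subst. apply e_max; auto.
  - destruct H; split; eauto.
  - destruct H; [left|right]; eauto.
  - intros z Hz; apply H; eapply le_trans; eauto.
  - intros z w Hz; apply H; eapply le_trans; eauto.
  - intros z Hz; apply H; eapply le_trans; eauto.
Qed.

Lemma base_axiom_valid f x : base_axiom f -> forces F V x f.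
Proof.
  destruct 1; cbn.
  - intros y Hy Hp z Hz Hq. eapply forces_mono; eauto.
  - intros y Hy H1 z Hz H2 w Hw H3.
    apply (H1 w (le_trans _ _ _ _ Hz Hw) H3 w (le_refl _ _) (H2 w Hw H3)).
  - intros y _ [H _]; auto.
  - intros y _ [_ H]; auto.
  - intros y Hy H1 z Hz H2; split; auto. eapply forces_mono; eauto.
  - intros y _ H; auto.
  - intros y _ H; auto.
  - intros y Hy H1 z Hz H2 w Hw [H3|H3].
    + apply (H1 w); auto. eapply le_trans; eauto.
    + apply (H2 w); auto.
  - intros y Hy H; subst. apply forces_at_e.
  - intros y Hy H1 z Hz H2 w v Hw Hv.
    apply (H1 w v); [eapply le_trans; eauto|auto|apply le_refl|]. apply (H2 w v); auto.
  - intros y Hy H1 z Hz H2 w Hw.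
    destruct (H2 w Hw) as [v [Hv Hp]]. exists v; split; auto.
    apply (H1 w v); [eapply le_trans; eauto|auto|apply le_refl|auto].
Qed.

Lemma N_axiom_valid x : N_corr F -> forces F V x (Imp (Dia Bot) Bot).
Proof.
  intros HN y _ H. apply HN. intros z Hz.
  destruct (H z Hz) as [v [Hv ->]]; exact Hv.
Qed.

Lemma C_axiom_valid p q x :
  C_corr F -> forces F V x (Imp (Dia (Or p q)) (Or (Dia p) (Dia q))).
Proof.
  intros HC y _ H. apply NNPP; intros Hpq. apply not_or_and in Hpq as [Hp Hq].
  apply not_all_ex_not in Hp as [y1 Hp]; apply imply_to_and in Hp as [Hy1 Hp].
  apply not_all_ex_not in Hq as [y2 Hq]; apply imply_to_and in Hq as [Hy2 Hq].
  assert (N1 : ~ R F y1 (e F))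
    by (intros C; apply Hp; exists (e F); split; auto; apply forces_at_e).
  assert (N2 : ~ R F y2 (e F))
    by (intros C; apply Hq; exists (e F); split; auto; apply forces_at_e).
  destruct (HC y y1 y2 N1 N2 Hy1 Hy2) as [w [Hw [S1 S2]]].
  destruct (H w Hw) as [z [Hz [Hzp|Hzq]]].
  - destruct (S1 z Hz) as [t [Ht Hzt]].
    apply Hp; exists t; split; auto. eapply forces_mono; eauto.
  - destruct (S2 z Hz) as [t [Ht Hzt]].
    apply Hq; exists t; split; auto. eapply forces_mono; eauto.
Qed.

Lemma I_axiom_valid p q x :
  I_corr F -> forces F V x (Imp (Imp (Dia p) (Box q)) (Box (Imp p q))).
Proof.
  intros HI y _ H y1 z Hy1 Hz z' Hz' Hp.
  destruct (classic (z' = e F)) as [->|Hne]; [apply forces_at_e|].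
  destruct (HI y1 z z' Hz Hz' Hne) as [u [w [Hu [Huw [Hwz Hs]]]]].
  assert (Hdia : forces F V u (Dia p)).
  { intros s Hs'. destruct (Hs s Hs') as [Hse|[t [Ht Hzt]]].
    - exists (e F); split; auto; apply forces_at_e.
    - exists t; split; auto. eapply forces_mono; eauto. }
  assert (Hbox : forces F V u (Box q)) by exact (H u (le_trans _ _ _ _ Hy1 Hu) Hdia).
  eapply forces_mono; [exact Hwz|]. apply (Hbox u w); auto. apply le_refl.
Qed.

End Soundness.

Lemma ax_instance_valid a f F V x : corr a F -> ax_instance a f -> forces F V x f.
Proof.
  destruct a; cbn; intros HF HI.
  - subst; apply N_axiom_valid; exact HF.
  - destruct HI as [p [q ->]]; apply C_axiom_valid; exact HF.
  - destruct HI as [p [q ->]]; apply I_axiom_valid; exact HF.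
Qed.

Lemma soundness Ax G f : derives Ax G f -> sem_cons (frame_class Ax) G f.
Proof.
  induction 1; intros F V x HF HG.
  - apply base_axiom_valid; auto.
  - eapply ax_instance_valid; eauto.
  - auto.
  - apply (IHderives2 F V x HF HG x (le_refl _ _)), (IHderives1 F V x HF HG).
  - intros y z _ _. apply IHderives; auto. intros g [].
Qed.

Definition no_forms : form -> Prop := fun _ => False.
Definition all_forms : form -> Prop := fun _ => True.
Definition extend (G : form -> Prop) (a : form) : form -> Prop := fun x => G x \/ x = a.

Fixpoint disj (l : list form) : form :=
  match l with [] => Bot | d :: l => Or d (disj l) end.

Section Completeness.
Variable Ax : axname -> Prop.
Local Notation "G ⊢ f" := (derives Ax G f) (at level 70).

Lemma derives_weaken G G' f : G ⊢ f -> (forall x, G x -> G' x) -> G' ⊢ f.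
Proof.
  intros H; revert G'; induction H; intros G' HG.
  - now apply d_base.
  - eapply d_ax; eauto.
  - apply d_el; auto.
  - eapply d_mp; eauto.
  - now apply d_nec.
Qed.

Lemma derives_of_theorem G f : no_forms ⊢ f -> G ⊢ f.
Proof. intros H; eapply derives_weaken; [exact H|]; intros x []. Qed.

Lemma derives_app G f g : G ⊢ Imp f g -> G ⊢ f -> G ⊢ g.
Proof. intros; eapply d_mp; eauto. Qed.

Lemma derives_hyp G a : extend G a ⊢ a.
Proof. apply d_el; right; reflexivity. Qed.

Lemma derives_extend G a f : G ⊢ f -> extend G a ⊢ f.
Proof. intros H; eapply derives_weaken; [exact H|]; intros x Hx; left; exact Hx. Qed.

Lemma derives_const G a f : G ⊢ f -> G ⊢ Imp a f.
Proof. intros H; eapply derives_app; [apply d_base, IPC1|exact H]. Qed.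

Lemma derives_imp_refl G a : G ⊢ Imp a a.
Proof.
  apply (derives_app _ (Imp a (Imp a a))); [|apply d_base, IPC1].
  apply (derives_app _ (Imp a (Imp (Imp a a) a))); apply d_base; constructor.
Qed.

Lemma deduction G a b : extend G a ⊢ b -> G ⊢ Imp a b.
Proof.
  intros H. remember (extend G a) as Ga eqn:E. revert G E.
  induction H as [? f Hf|? c f Hc Hf|? f Hf|? f g _ IH1 _ IH2|? f Hf _]; intros G' ->.
  - apply derives_const, d_base, Hf.
  - apply derives_const; eapply d_ax; eauto.
  - destruct Hf as [Hf| ->].
    + apply derives_const, d_el, Hf.
    + apply derives_imp_refl.
  - eapply derives_app; [eapply derives_app; [apply d_base, IPC2|apply IH2]|apply IH1];
      reflexivity.
  - apply derives_const, d_nec, Hf.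
Qed.

Lemma imp_trans G a b c : G ⊢ Imp a b -> G ⊢ Imp b c -> G ⊢ Imp a c.
Proof.
  intros H1 H2; apply deduction.
  eapply derives_app; [apply derives_extend; exact H2|].
  eapply derives_app; [apply derives_extend; exact H1|apply derives_hyp].
Qed.

Lemma or_elim G a b c : G ⊢ Or a b -> G ⊢ Imp a c -> G ⊢ Imp b c -> G ⊢ c.
Proof.
  intros H H1 H2. eapply derives_app; [|exact H].
  eapply derives_app; [|exact H2]. eapply derives_app; [|exact H1]. apply d_base, IPC8.
Qed.

Lemma box_mono G a b : no_forms ⊢ Imp a b -> G ⊢ Imp (Box a) (Box b).
Proof. intros H; eapply derives_app; [apply d_base, KBox|]. apply d_nec, H. Qed.

Lemma dia_mono G a b : no_forms ⊢ Imp a b -> G ⊢ Imp (Dia a) (Dia b).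
Proof. intros H; eapply derives_app; [apply d_base, KDia|]. apply d_nec, H. Qed.

Lemma derives_compact G f :
  G ⊢ f -> exists l, (forall x, In x l -> G x) /\ (fun x => In x l) ⊢ f.
Proof.
  induction 1 as [? f Hf|? a f Ha Hf|? f Hf|? f g _ [l1 [H1 D1]] _ [l2 [H2 D2]]|? f Hf _].
  - exists []; split; [intros x []|apply d_base; auto].
  - exists []; split; [intros x []|eapply d_ax; eauto].
  - exists [f]; split; [intros x [<-|[]]; auto|apply d_el; left; auto].
  - exists (l1 ++ l2); split.
    + intros x Hx; apply in_app_or in Hx as [Hx|Hx]; auto.
    + eapply d_mp; [eapply derives_weaken; [exact D1|]|eapply derives_weaken; [exact D2|]];
        intros x Hx; apply in_or_app; auto.
  - exists []; split; [intros x []|apply d_nec; auto].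
Qed.

Lemma disj_app_l G l1 l2 : G ⊢ Imp (disj l1) (disj (l1 ++ l2)).
Proof.
  induction l1 as [|a l1 IH]; cbn.
  - apply d_base, IPC9.
  - apply deduction. eapply or_elim; [apply derives_hyp|apply d_base, IPC6|].
    eapply imp_trans; [apply derives_extend, IH|apply d_base, IPC7].
Qed.

Lemma disj_app_r G l1 l2 : G ⊢ Imp (disj l2) (disj (l1 ++ l2)).
Proof.
  induction l1 as [|a l1 IH]; cbn.
  - apply derives_imp_refl.
  - eapply imp_trans; [exact IH|apply d_base, IPC7].
Qed.

Lemma disj_all_eq G l f : (forall d, In d l -> d = f) -> G ⊢ Imp (disj l) f.
Proof.
  induction l as [|a l IH]; intros H; cbn.
  - apply d_base, IPC9.
  - rewrite (H a (or_introl eq_refl)). apply deduction.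
    eapply or_elim; [apply derives_hyp|apply derives_imp_refl|].
    apply derives_extend, IH; intros; apply H; right; auto.
Qed.

Definition theory (G : form -> Prop) : Prop := forall f, G ⊢ f -> G f.

Definition prime_theory (G : form -> Prop) : Prop :=
  theory G /\ forall a b, G (Or a b) -> G a \/ G b.

Lemma theory_mp G a b : theory G -> G (Imp a b) -> G a -> G b.
Proof. intros T H1 H2; apply T; eapply derives_app; apply d_el; eauto. Qed.

Lemma theory_thm G f : theory G -> no_forms ⊢ f -> G f.
Proof. intros T H; apply T, derives_of_theorem, H. Qed.

Lemma theory_base G f : theory G -> base_axiom f -> G f.
Proof. intros T H; apply T, d_base, H. Qed.

Lemma theory_and G a b : theory G -> G (And a b) <-> G a /\ G b.
Proof.
  intros T; split.
  - intros H; split; (eapply theory_mp; [exact T|apply theory_base; [exact T|constructor]|exact H]).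
  - intros [H1 H2]. eapply theory_mp; [exact T| |exact H2].
    eapply theory_mp; [exact T|apply theory_base; [exact T|constructor]|exact H1].
Qed.

Lemma theory_explode G f : theory G -> G Bot -> G f.
Proof. intros T H; eapply theory_mp; [exact T|apply theory_base; [exact T|constructor]|exact H]. Qed.

Lemma theory_box G g : theory G -> (fun f => G (Box f)) ⊢ g -> G (Box g).
Proof.
  intros T H. apply derives_compact in H as [l [Hl Hd]].
  revert g Hd. induction l as [|a l IH]; intros g Hd.
  - apply T, d_nec. eapply derives_weaken; [exact Hd|]; intros x [].
  - assert (Hag : (fun x => In x l) ⊢ Imp a g).
    { apply deduction. eapply derives_weaken; [exact Hd|].
      intros x [<-|Hx]; [right|left]; auto. }
    eapply theory_mp; [exact T| |apply (Hl a); left; auto].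
    eapply theory_mp; [exact T|apply theory_base; [exact T|apply KBox]|].
    exact (IH (fun x Hx => Hl x (or_intror Hx)) _ Hag).
Qed.

Lemma theory_dia_of_box G a b : theory G -> G (Box (Imp a b)) -> G (Dia a) -> G (Dia b).
Proof.
  intros T Hab Ha. eapply theory_mp; [exact T| |exact Ha].
  eapply theory_mp; [exact T|apply theory_base; [exact T|apply KDia]|exact Hab].
Qed.

Lemma prime_all : prime_theory all_forms.
Proof. split; [intros f _; exact I|intros a b _; left; exact I]. Qed.

Definition directed (T : form -> Prop) : Prop :=
  (exists d, T d) /\ forall d1 d2, T d1 -> T d2 ->
    exists d, T d /\ no_forms ⊢ Imp d d1 /\ no_forms ⊢ Imp d d2.

Lemma derives_union_directed T1 T2 g :
  directed T1 -> (fun x => T1 x \/ T2 x) ⊢ g -> exists d, T1 d /\ T2 ⊢ Imp d g.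
Proof.
  intros [[d0 Hd0] Hdir] H. apply derives_compact in H as [l [Hl Hd]].
  assert (Hlg : (fun x => In x l \/ T2 x) ⊢ g)
    by (eapply derives_weaken; [exact Hd|]; intros x Hx; left; exact Hx).
  clear Hd. revert g Hlg. induction l as [|a l IH]; intros g Hlg.
  - exists d0; split; auto. apply derives_const.
    eapply derives_weaken; [exact Hlg|]. intros x [[]|Hx]; exact Hx.
  - assert (Hag : (fun x => In x l \/ T2 x) ⊢ Imp a g).
    { apply deduction. eapply derives_weaken; [exact Hlg|].
      intros x [[<-|Hx]|Hx]; [right|left; left|left; right]; auto. }
    destruct (IH (fun x Hx => Hl x (or_intror Hx)) _ Hag) as [d [Hd Hdag]].
    destruct (Hl a (or_introl eq_refl)) as [Ha|Ha].
    + destruct (Hdir d a Hd Ha) as [d' [Hd' [Hd'd Hd'a]]]. exists d'; split; auto.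
      apply deduction. eapply derives_app; [eapply derives_app|].
      * apply derives_extend; exact Hdag.
      * eapply derives_app; [apply derives_of_theorem, Hd'd|apply derives_hyp].
      * eapply derives_app; [apply derives_of_theorem, Hd'a|apply derives_hyp].
    + exists d; split; auto. apply deduction.
      eapply derives_app; [eapply derives_app; [apply derives_extend, Hdag|apply derives_hyp]|].
      apply d_el; left; exact Ha.
Qed.

Lemma theory_directed G : theory G -> directed G.
Proof.
  intros T; split.
  - exists (Imp Bot Bot); apply theory_base; [exact T|constructor].
  - intros d1 d2 H1 H2. exists (And d1 d2).
    split; [apply theory_and; auto|split; apply d_base; constructor].
Qed.

Lemma dia_theory_directed G : theory G -> directed (fun x => exists t, G t /\ x = Dia t).
Proof.
  intros T; split.
  - exists (Dia (Imp Bot Bot)), (Imp Bot Bot); split; auto.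
    apply theory_base; [exact T|constructor].
  - intros d1 d2 [t1 [H1 ->]] [t2 [H2 ->]]. exists (Dia (And t1 t2)); split.
    + exists (And t1 t2); split; auto; apply theory_and; auto.
    + split; apply dia_mono, d_base; constructor.
Qed.

(* The disjunctions are nonempty so that [avoids S no_forms] holds even for inconsistent [S]. *)
Definition proves_disj (S D : form -> Prop) : Prop :=
  exists ds, (forall d, In d ds -> D d) /\ ds <> [] /\ S ⊢ disj ds.

Definition avoids (S D : form -> Prop) : Prop := ~ proves_disj S D.

Lemma avoids_anti S S' D : (forall x, S x -> S' x) -> avoids S' D -> avoids S D.
Proof.
  intros HS Hav [ds [Hds [Hne Hd]]]. apply Hav.
  exists ds; repeat split; auto. eapply derives_weaken; eauto.
Qed.

Lemma avoids_single G f : ~ G ⊢ f -> avoids G (fun x => x = f).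
Proof.
  intros Hf [ds [Hds [_ Hd]]]. apply Hf.
  eapply derives_app; [apply disj_all_eq; exact Hds|exact Hd].
Qed.

Section Lindenbaum.
Variables T D : form -> Prop.
Hypothesis T_avoids : avoids T D.

Fixpoint stage (n : nat) : form -> Prop :=
  match n with
  | 0 => T
  | S n => fun f => stage n f \/ (form_code f = n /\ avoids (extend (stage n) f) D)
  end.

Definition stage_limit (f : form) : Prop := exists n, stage n f.

Lemma stage_mono m n f : m <= n -> stage m f -> stage n f.
Proof. induction 1; cbn; auto. Qed.

Lemma stage_avoids n : avoids (stage n) D.
Proof.
  induction n as [|n IH]; [exact T_avoids|].
  destruct (classic (exists f, form_code f = n /\ avoids (extend (stage n) f) D))
    as [[f [Hf Hav]]|Hnone].
  - apply (avoids_anti _ (extend (stage n) f)); [|exact Hav].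
    intros x [Hx|[Hx _]]; [left; exact Hx|right].
    apply form_code_inj; congruence.
  - apply (avoids_anti _ (stage n)); [|exact IH].
    intros x [Hx|Hx]; [exact Hx|exfalso; apply Hnone; eauto].
Qed.

Lemma stage_list l : (forall x, In x l -> stage_limit x) ->
  exists N, forall x, In x l -> stage N x.
Proof.
  induction l as [|a l IH]; intros H.
  - exists 0; intros x [].
  - destruct (H a (or_introl eq_refl)) as [n Hn].
    destruct IH as [N HN]; [intros; apply H; right; auto|].
    exists (n + N); intros x [<-|Hx].
    + eapply stage_mono; [|exact Hn]; lia.
    + eapply stage_mono; [|apply HN, Hx]; lia.
Qed.

Lemma stage_limit_or_refuted f : stage_limit f \/
  exists ds, (forall d, In d ds -> D d) /\ ds <> [] /\
    forall N, form_code f <= N -> stage N ⊢ Imp f (disj ds).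
Proof.
  destruct (classic (avoids (extend (stage (form_code f)) f) D)) as [Hav|Hnav].
  - left; exists (S (form_code f)); right; auto.
  - right. apply NNPP in Hnav as [ds [Hds [Hne Hd]]].
    exists ds; repeat split; auto. intros N HN. apply deduction.
    eapply derives_weaken; [exact Hd|].
    intros x [Hx|Hx]; [left; eapply stage_mono; eauto|right; exact Hx].
Qed.

Lemma stage_limit_theory : theory stage_limit.
Proof.
  intros f Hf. apply derives_compact in Hf as [l [Hl Hd]].
  destruct (stage_list l Hl) as [N HN].
  destruct (stage_limit_or_refuted f) as [Hf|[ds [Hds [Hne Himp]]]]; [exact Hf|].
  exfalso. apply (stage_avoids (N + form_code f)). exists ds; repeat split; auto.
  eapply derives_app; [apply Himp; lia|].
  eapply derives_weaken; [exact Hd|]. intros x Hx; eapply stage_mono; [|apply HN, Hx]; lia.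
Qed.

Lemma stage_limit_prime : prime_theory stage_limit.
Proof.
  split; [exact stage_limit_theory|].
  intros a b [m Hm].
  destruct (stage_limit_or_refuted a) as [Ha|[ds1 [Hds1 [Hne1 Himp1]]]]; [left; exact Ha|].
  destruct (stage_limit_or_refuted b) as [Hb|[ds2 [Hds2 [_ Himp2]]]]; [right; exact Hb|].
  exfalso. set (N := m + form_code a + form_code b).
  apply (stage_avoids N). exists (ds1 ++ ds2); repeat split.
  - intros d Hd; apply in_app_or in Hd as [Hd|Hd]; auto.
  - destruct ds1; [congruence|discriminate].
  - eapply or_elim.
    + apply d_el; eapply stage_mono; [|exact Hm]; unfold N; lia.
    + eapply imp_trans; [apply Himp1; unfold N; lia|apply disj_app_l].
    + eapply imp_trans; [apply Himp2; unfold N; lia|apply disj_app_r].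
Qed.

Lemma stage_limit_avoids d : D d -> ~ stage_limit d.
Proof.
  intros Hd [n Hn]. apply (stage_avoids n). exists [d]; repeat split.
  - intros x [<-|[]]; exact Hd.
  - discriminate.
  - eapply derives_app; [apply d_base, IPC6|apply d_el; exact Hn].
Qed.

End Lindenbaum.

Lemma lindenbaum T D : avoids T D ->
  exists P, prime_theory P /\ (forall f, T f -> P f) /\ (forall d, D d -> ~ P d).
Proof.
  intros Hav. exists (stage_limit T D); split; [|split].
  - apply stage_limit_prime, Hav.
  - intros f Hf; exists 0; exact Hf.
  - apply stage_limit_avoids, Hav.
Qed.

Definition successor (G D P : form -> Prop) : Prop :=
  prime_theory P /\ (forall f, G (Box f) -> P f) /\ (forall d, D d -> ~ P d).

Definition dia_avoids (G D : form -> Prop) : Prop :=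
  forall ds, (forall d, In d ds -> D d) -> ds <> [] -> ~ G (Dia (disj ds)).

Lemma dia_avoids_none G : dia_avoids G no_forms.
Proof. intros [|d ds] Hds Hne; [congruence|]. destruct (Hds d (or_introl eq_refl)). Qed.

Lemma dia_avoids_single G f : theory G -> ~ G (Dia f) -> dia_avoids G (fun x => x = f).
Proof.
  intros T Hf ds Hds _ Hd. apply Hf. eapply theory_mp; [exact T| |exact Hd].
  apply theory_thm; [exact T|]. apply dia_mono, disj_all_eq, Hds.
Qed.

Record cworld := CWorld {
  wth : form -> Prop;
  wavoid : form -> Prop;
  wprime : prime_theory wth;
  wcons : ~ wth Bot;
  wdia : dia_avoids wth wavoid
}.

Definition th (w : option cworld) : form -> Prop :=
  match w with None => all_forms | Some a => wth a end.

Definition cle (x y : option cworld) : Prop := forall f, th x f -> th y f.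

Definition cR (x y : option cworld) : Prop :=
  match x with None => y = None | Some a => successor (wth a) (wavoid a) (th y) end.

Lemma cle_refl x : cle x x.
Proof. intros f H; exact H. Qed.

Lemma cle_trans x y z : cle x y -> cle y z -> cle x z.
Proof. intros H1 H2 f H; apply H2, H1, H. Qed.

Lemma cle_e y : cle None y -> y = None.
Proof. destruct y as [b|]; [intros H; destruct (wcons b (H Bot I))|reflexivity]. Qed.

Lemma cR_e x : cR None x <-> x = None.
Proof. reflexivity. Qed.

Definition CF : frame := Frame (option cworld) cle None cR cle_refl cle_trans cle_e cR_e.

Definition CV : valuation CF :=
  Valuation CF (fun p w => th w (Var p)) (fun p x y H => H (Var p)) (fun p => I).

Lemma th_theory w : theory (th w).
Proof. destruct w as [a|]; [apply wprime|apply prime_all]. Qed.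

Lemma world_of_prime P : prime_theory P -> exists w, th w = P.
Proof.
  intros HP. destruct (classic (P Bot)) as [HB|HB].
  - exists None. apply functional_extensionality; intros f.
    apply propositional_extensionality; split; [intros _|intros _; exact I].
    apply (theory_explode _ _ (proj1 HP) HB).
  - exists (Some (CWorld P no_forms HP HB (dia_avoids_none P))). reflexivity.
Qed.

Lemma th_bot w : th w Bot <-> w = None.
Proof.
  destruct w as [a|]; cbn; split.
  - intros H; destruct (wcons a H).
  - discriminate.
  - reflexivity.
  - intros _; exact I.
Qed.

Lemma th_and w f g : th w (And f g) <-> th w f /\ th w g.
Proof. apply theory_and, th_theory. Qed.

Lemma th_or w f g : th w (Or f g) <-> th w f \/ th w g.
Proof.
  destruct w as [a|]; cbn; [split|unfold all_forms; tauto].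
  - apply wprime.
  - pose proof (proj1 (wprime a)) as T.
    intros [H|H]; (eapply theory_mp; [exact T|apply theory_base; [exact T|constructor]|exact H]).
Qed.

Lemma th_imp w f g : th w (Imp f g) -> th w f -> th w g.
Proof. apply theory_mp, th_theory. Qed.

Lemma th_box y z f : th y (Box f) -> cR y z -> th z f.
Proof. destruct y as [a|]; cbn; [intros H [_ [Hb _]]; apply Hb, H|intros _ ->; exact I]. Qed.

Lemma successor_of_dia (a : cworld) p :
  wth a (Dia p) -> exists P, successor (wth a) (wavoid a) P /\ P p.
Proof.
  intros Hp. pose proof (proj1 (wprime a)) as T.
  destruct (lindenbaum (extend (fun f => wth a (Box f)) p) (wavoid a))
    as [P [HP [HaP HPav]]].
  - intros [ds [Hds [Hne Hd]]]. apply (wdia a ds Hds Hne).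
    apply (theory_dia_of_box _ p); [exact T| |exact Hp].
    apply theory_box; [exact T|]. apply deduction, Hd.
  - exists P; split; [split; [exact HP|split]|].
    + intros f Hf; apply HaP; left; exact Hf.
    + exact HPav.
    + apply HaP; right; reflexivity.
Qed.

Lemma th_dia y f : th y (Dia f) -> exists z, cR y z /\ th z f.
Proof.
  destruct y as [a|]; cbn; [|exists None; split; [reflexivity|exact I]].
  intros Hf. destruct (successor_of_dia a f Hf) as [P [HaP HP]].
  destruct (world_of_prime P (proj1 HaP)) as [z <-]. exists z; split; assumption.
Qed.

Lemma imp_counter (a : cworld) f g :
  ~ wth a (Imp f g) -> exists w, cle (Some a) w /\ th w f /\ ~ th w g.
Proof.
  intros Hfg. destruct (lindenbaum (extend (wth a) f) (fun x => x = g)) as [P [HP [HaP HPg]]].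
  - apply avoids_single. intros Hd. apply Hfg, (proj1 (wprime a)), deduction, Hd.
  - destruct (world_of_prime P HP) as [w <-]. exists w; split; [|split].
    + intros h Hh; apply HaP; left; exact Hh.
    + apply HaP; right; reflexivity.
    + apply HPg; reflexivity.
Qed.

Lemma box_counter (a : cworld) f :
  ~ wth a (Box f) -> exists y z, cle (Some a) y /\ cR y z /\ ~ th z f.
Proof.
  intros Hf. destruct (lindenbaum (fun x => wth a (Box x)) (fun x => x = f)) as [P [HP [HaP HPf]]].
  - apply avoids_single. intros Hd. apply Hf, theory_box, Hd. apply wprime.
  - destruct (world_of_prime P HP) as [z <-].
    exists (Some (CWorld (wth a) no_forms (wprime a) (wcons a) (dia_avoids_none _))), z.
    split; [intros h Hh; exact Hh|split; [split; [exact HP|split; [exact HaP|intros d []]]|]].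
    apply HPf; reflexivity.
Qed.

Lemma dia_counter (a : cworld) f :
  ~ wth a (Dia f) -> exists y, cle (Some a) y /\ forall z, cR y z -> ~ th z f.
Proof.
  intros Hf.
  exists (Some (CWorld (wth a) (fun x => x = f) (wprime a) (wcons a)
                 (dia_avoids_single _ _ (proj1 (wprime a)) Hf))).
  split; [intros h Hh; exact Hh|]. intros z [_ [_ Hz]]. apply Hz; reflexivity.
Qed.

Lemma truth f w : forces CF CV w f <-> th w f.
Proof.
  revert w; induction f as [p| |f IHf g IHg|f IHf g IHg|f IHf g IHg|f IHf|f IHf];
    intros w; cbn [forces].
  - reflexivity.
  - symmetry; apply th_bot.
  - rewrite IHf, IHg; symmetry; apply th_and.
  - rewrite IHf, IHg; symmetry; apply th_or.
  - split.
    + intros H. destruct w as [a|]; [|exact I]. apply NNPP; intros C.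
      destruct (imp_counter a f g C) as [y [Hay [Hf Hg]]].
      apply Hg, IHg, (H y Hay), IHf, Hf.
    + intros H y Hy Hf. apply IHg, (th_imp y f); [exact (Hy _ H)|apply IHf, Hf].
  - split.
    + intros H. destruct w as [a|]; [|exact I]. apply NNPP; intros C.
      destruct (box_counter a f C) as [y [z [Hay [Hyz Hz]]]].
      apply Hz, IHf, (H y z Hay Hyz).
    + intros H y z Hy Hyz. apply IHf, (th_box y); [exact (Hy _ H)|exact Hyz].
  - split.
    + intros H. destruct w as [a|]; [|exact I]. apply NNPP; intros C.
      destruct (dia_counter a f C) as [y [Hay Hy]].
      destruct (H y Hay) as [z [Hyz Hz]]. apply (Hy z Hyz), IHf, Hz.
    + intros H y Hy. destruct (th_dia y f (Hy _ H)) as [z [Hyz Hz]].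
      exists z; split; [exact Hyz|apply IHf, Hz].
Qed.

(* [x] is refuted by every R-successor of [b], for a syntactic reason. *)
Definition blocked (b : cworld) (x : form) : Prop :=
  exists ds, (forall d, In d ds -> wavoid b d) /\ ds <> [] /\
    (fun f => wth b (Box f)) ⊢ Imp x (disj ds).

Lemma blocked_not_dia b x : blocked b x -> ~ wth b (Dia x).
Proof.
  intros [ds [Hds [Hne Hd]]] Hx. pose proof (proj1 (wprime b)) as T.
  apply (wdia b ds Hds Hne), (theory_dia_of_box _ x); [exact T| |exact Hx].
  apply theory_box; [exact T|exact Hd].
Qed.

Lemma successor_above (s : cworld) (P : form -> Prop) :
  theory P -> (forall t, P t -> ~ blocked s t) ->
  exists z, cR (Some s) z /\ forall f, P f -> th z f.
Proof.
  intros TP HP.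
  destruct (lindenbaum (fun x => P x \/ wth s (Box x)) (wavoid s)) as [Q [HQ [HPQ HQav]]].
  - intros [ds [Hds [Hne Hd]]].
    destruct (derives_union_directed _ _ _ (theory_directed _ TP) Hd) as [t [Ht Htd]].
    apply (HP t Ht). exists ds; auto.
  - destruct (world_of_prime Q HQ) as [z <-]. exists z; split.
    + split; [exact HQ|split; [intros f Hf; apply HPQ; right; exact Hf|exact HQav]].
    + intros f Hf; apply HPQ; left; exact Hf.
Qed.

Lemma sub_down (a b : cworld) :
  (forall x, blocked b x -> wavoid a x) -> R_sub_down CF (Some a) (Some b).
Proof.
  intros Hab v [_ [_ Hv]].
  apply successor_above; [apply th_theory|].
  intros t Ht Hbt. exact (Hv t (Hab t Hbt) Ht).
Qed.

Lemma R_e_of_dia_bot (b : cworld) : wth b (Dia Bot) -> cR (Some b) None.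
Proof.
  intros HB. split; [exact prime_all|split; [intros; exact I|]].
  intros d Hd _. apply (wdia b [d]); [intros x [<-|[]]; exact Hd|discriminate|].
  pose proof (proj1 (wprime b)) as T.
  eapply theory_mp; [exact T| |exact HB]. apply theory_thm; [exact T|].
  apply dia_mono, d_base, IPC7.
Qed.

Lemma dia_disj_split G ds : Ax AxC -> prime_theory G -> G (Dia (disj ds)) ->
  G (Dia Bot) \/ exists d, In d ds /\ G (Dia d).
Proof.
  intros HC [T P]. induction ds as [|d ds IH]; cbn; intros H; auto.
  assert (Hor : G (Or (Dia d) (Dia (disj ds)))).
  { eapply theory_mp; [exact T| |exact H]. apply T. eapply d_ax; [exact HC|]. cbn; eauto. }
  destruct (P _ _ Hor) as [H1|H1]; [right; exists d; auto|].
  destruct (IH H1) as [H2|[d' [H2 H3]]]; auto. right; exists d'; auto.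
Qed.

Lemma canonical_C : Ax AxC -> C_corr CF.
Proof.
  intros HC x y z Hy Hz Hxy Hxz.
  destruct y as [b|]; [|exfalso; apply Hy; reflexivity].
  destruct z as [c|]; [|exfalso; apply Hz; reflexivity].
  destruct x as [a|]; [|discriminate (cle_e _ Hxy)].
  assert (Hav : dia_avoids (wth a) (fun x => blocked b x \/ blocked c x)).
  { intros ds Hds Hne Hd.
    destruct (dia_disj_split _ ds HC (wprime a) Hd) as [HB|[d [Hin Hdd]]].
    - apply Hy, R_e_of_dia_bot, Hxy, HB.
    - destruct (Hds d Hin) as [Hbd|Hcd].
      + apply (blocked_not_dia b d Hbd), Hxy, Hdd.
      + apply (blocked_not_dia c d Hcd), Hxz, Hdd. }
  exists (Some (CWorld (wth a) _ (wprime a) (wcons a) Hav)).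
  split; [intros f Hf; exact Hf|split; apply sub_down; intros; [left|right]; assumption].
Qed.

Lemma canonical_N : Ax AxN -> N_corr CF.
Proof.
  intros HN x Hx. destruct x as [a|]; [exfalso|reflexivity].
  assert (HnB : ~ wth a (Dia Bot)).
  { intros HB. apply (wcons a). pose proof (proj1 (wprime a)) as T.
    eapply theory_mp; [exact T|apply T; eapply d_ax; [exact HN|reflexivity]|exact HB]. }
  destruct (dia_counter a Bot HnB) as [y [Hay Hy]].
  exact (Hy None (Hx y Hay) I).
Qed.

Lemma disj_boxes_refuted P : prime_theory P -> ~ P Bot -> forall ds,
  (forall d, In d ds -> exists x, d = Box x /\ ~ P x) ->
  exists x, ~ P x /\ no_forms ⊢ Imp (disj ds) (Box x).
Proof.
  intros [T HP] HB. induction ds as [|d ds IH]; intros H; cbn.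
  - exists Bot; split; [exact HB|apply d_base, IPC9].
  - destruct (H d (or_introl eq_refl)) as [x1 [-> N1]].
    destruct IH as [x2 [N2 D2]]; [intros; apply H; right; auto|].
    exists (Or x1 x2); split; [intros C; destruct (HP _ _ C); auto|].
    apply deduction. eapply or_elim; [apply derives_hyp| |].
    + apply box_mono, d_base, IPC6.
    + apply derives_of_theorem. eapply imp_trans; [exact D2|apply box_mono, d_base, IPC7].
Qed.

(* The theory of the world [u] witnessing (I-corr) for [a R b <= c]: it extends [a] by
   [Dia t] for every [t] in [c] while avoiding [Box y] for every [y] outside [c], which is
   consistent by the I axiom. *)
Lemma I_witness_theory (a b c : cworld) : Ax AxI ->
  cR (Some a) (Some b) -> cle (Some b) (Some c) ->
  exists U, prime_theory U /\ (forall f, wth a f -> U f) /\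
    (forall t, wth c t -> U (Dia t)) /\ (forall f, U (Box f) -> wth c f).
Proof.
  intros HI [_ [Hab _]] Hbc. pose proof (wprime c) as Pc. pose proof (proj1 (wprime a)) as Ta.
  destruct (lindenbaum (fun x => (exists t, wth c t /\ x = Dia t) \/ wth a x)
              (fun x => exists y, x = Box y /\ ~ wth c y)) as [U [PU [HU HUav]]].
  - intros [ds [Hds [Hne Hd]]].
    destruct (disj_boxes_refuted _ Pc (wcons c) ds Hds) as [x [Hx Hdx]].
    pose proof (derives_app _ _ _ (derives_of_theorem _ _ Hdx) Hd) as Hbx.
    destruct (derives_union_directed _ _ _ (dia_theory_directed _ (proj1 Pc)) Hbx)
      as [dl [[t [Ht ->]] Htx]].
    assert (Hbox : wth a (Box (Imp t x))).
    { eapply theory_mp; [exact Ta|apply Ta; eapply d_ax; [exact HI|cbn; eauto]|apply Ta, Htx]. }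
    apply Hx, (theory_mp _ t); [exact (proj1 Pc)|apply Hbc, Hab, Hbox|exact Ht].
  - exists U; split; [exact PU|split; [|split]].
    + intros f Hf; apply HU; right; exact Hf.
    + intros t Ht; apply HU; left; exists t; auto.
    + intros f Hf. apply NNPP; intros C. apply (HUav (Box f)); [exists f; auto|exact Hf].
Qed.

Lemma canonical_I : Ax AxI -> I_corr CF.
Proof.
  intros HI x y z Hxy Hyz Hz.
  destruct z as [c|]; [|exfalso; apply Hz; reflexivity].
  destruct x as [a|]; [|cbn in Hxy; subst y; discriminate (cle_e _ Hyz)].
  destruct y as [b|]; [|discriminate (cle_e _ Hyz)].
  destruct (I_witness_theory a b c HI Hxy Hyz) as [U [PU [HaU [HcU HUc]]]].
  assert (HUB : ~ U Bot)
    by (intros HB; apply (wcons c), HUc, (theory_explode _ _ (proj1 PU) HB)).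
  exists (Some (CWorld U no_forms PU HUB (dia_avoids_none U))), (Some c).
  split; [exact HaU|split; [|split; [apply cle_refl|]]].
  - split; [apply wprime|split; [exact HUc|intros d []]].
  - intros [s|] Hus; [right|left; reflexivity].
    apply successor_above; [apply wprime|].
    intros t Ht Hst. apply (blocked_not_dia s t Hst), Hus, HcU, Ht.
Qed.

Lemma canonical_frame_class : frame_class Ax CF.
Proof.
  intros [| |] H; cbn; [apply canonical_N|apply canonical_C|apply canonical_I]; exact H.
Qed.

End Completeness.

Theorem mainTheorem10 (Ax : axname -> Prop) (Gamma : form -> Prop) (phi : form) :
  derives Ax Gamma phi <-> sem_cons (frame_class Ax) Gamma phi.
Proof.
  split; [apply soundness|].
  intros H. apply NNPP; intros Hphi.
  destruct (lindenbaum Ax Gamma (fun x => x = phi) (avoids_single Ax _ _ Hphi))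
    as [P [HP [HGP HPphi]]].
  destruct (world_of_prime Ax P HP) as [w <-].
  apply (HPphi phi eq_refl), truth, H; [apply canonical_frame_class|].
  intros g Hg. apply truth, HGP, Hg.
Qed.
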